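(* The class $\mathcal D$ of continua $X$ that are $d(X)$-Baire is a bloom class: if $X\in\mathcal D$ and $K\subset X$ is a subcontinuum, then the quotient $X/K$ is $d(X/K)$-Baire.
   Context: A continuum is a nondegenerate compact connected Hausdorff space. $d(X)$ is the least cardinality of a dense subset of $X$; $X$ is $\alpha$-Baire if every family of $\alpha$ many open dense subsets has dense intersection. For a subcontinuum $K\subset X$, the $K$-bloom is the canonical quotient map $X\to X/K$ collapsing $K$ to a single point. A class of continua is a bloom class if it is closed under blooms. *)

From HB Require Import structures.
From mathcomp Require Import all_boot all_order generic_quotient.
From mathcomp Require Import all_classical all_reals all_analysis.
Set Implicit Arguments. Unset Strict Implicit. Unset Printing Implicit Defensive.
Local Open Scope classical_set_scope.
Local Open Scope quotient_scope.

Definition continuum (X : topologicalType) : Prop :=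
  (exists x y : X, x <> y) /\ compact [set: X] /\ connected [set: X]
  /\ hausdorff_space X.

(* A subcontinuum of X: a subset which is a nondegenerate compact connected
   set (Hausdorffness is inherited from X). *)
Definition subcontinuum (X : topologicalType) (K : set X) : Prop :=
  (exists x y, K x /\ K y /\ x <> y) /\ compact K /\ connected K.

(* D is a dense subset of X of least cardinality, i.e. #|D| = d(X). *)
Definition min_dense (X : topologicalType) (D : set X) : Prop :=
  dense D /\ forall E : set X, dense E -> (D #<= E)%card.

(* X is d(X)-Baire: every family of d(X) many open dense subsets of X
   (indexed by a dense set D of cardinality d(X)) has dense intersection. *)
Definition density_Baire (X : topologicalType) : Prop :=
  forall D : set X, min_dense D ->
  forall U : X -> set X, (forall i, D i -> open (U i) /\ dense (U i)) ->
  dense (\bigcap_(i in D) U i).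

Definition bloom_rel (X : topologicalType) (K : set X) : rel X :=
  fun x y => `[< x = y \/ (K x /\ K y) >].

Lemma bloom_rel_refl (X : topologicalType) (K : set X) : reflexive (bloom_rel K).
Proof. by move=> x; apply/asboolP; left. Qed.

Lemma bloom_rel_sym (X : topologicalType) (K : set X) : symmetric (bloom_rel K).
Proof.
move=> x y; apply/asboolP/asboolP => -[->|[? ?]]; by [left|right].
Qed.

Lemma bloom_rel_trans (X : topologicalType) (K : set X) : transitive (bloom_rel K).
Proof.
move=> y x z /asboolP[->|[Kx Ky]] /asboolP[<-|[Ky' Kz]]; apply/asboolP;
  by [left|right].
Qed.

Definition bloom_equiv (X : topologicalType) (K : set X) : equiv_rel X :=
  EquivRel (bloom_rel K) (@bloom_rel_refl X K) (@bloom_rel_sym X K)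
    (@bloom_rel_trans X K).

Definition bloom (X : topologicalType) (K : set X) : topologicalType :=
  quotient_topology {eq_quot (bloom_equiv K)}.

From HB Require Import structures.
From mathcomp Require Import all_boot all_order generic_quotient.
From mathcomp Require Import all_classical all_reals all_analysis.
Local Open Scope classical_set_scope.
Local Open Scope quotient_scope.

(* Let pi : X -> X/K be the bloom. The image under pi of a dense set of X is
   dense, so d(X/K) <= d(X) and any family of d(X/K) open dense sets V_i of X/K
   can be reindexed by a minimal dense set of X. Since pi is injective off the
   closed set K, each pi^-1(V_i) `|` K° is open dense in X, and the
   d(X)-Baire property of X makes their intersection dense. A nonempty open
   set of X/K either meets pi(X \ K), and then meets every V_i at a common
   point, or is the single point pi(K), which every dense V_i contains. *)

Section card_le_minimum.
Variables (T : Type) (P : set (set T)).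

(* Zorn's lemma gives a maximal family of selectors that differ everywhere on
   P; maximality forces it to exhaust some E in P, and then picking for each
   a in E the selector through a injects E into every member of P. *)
Definition separated_selectors (S : set (set T -> T)) :=
  (forall s, S s -> forall E, P E -> E (s E)) /\
  (forall s t, S s -> S t -> s <> t -> forall E, P E -> s E <> t E).

Definition exhausts (S : set (set T -> T)) (E : set T) :=
  forall a, E a -> exists2 s, S s & s E = a.

Lemma exists_maximal_separated_selectors : exists S, separated_selectors S /\
  forall S', S `<` S' -> ~ separated_selectors S'.
Proof.
apply: Zorn_bigcup => F FS Ftot; split.
  by move=> s [S FS' Ss]; exact: (FS S FS').1.
move=> s t [S FS' Ss] [S' FS'' S't]; have [SS'|S'S] := Ftot _ _ FS' FS''.
  by apply: (FS S' FS'').2 => //; exact: SS'.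
by apply: (FS S FS').2 => //; exact: S'S.
Qed.

Lemma maximal_separated_selectors_exhaust {S} : P !=set0 ->
  separated_selectors S -> (forall S', S `<` S' -> ~ separated_selectors S') ->
  exists2 E, P E & exhausts S E.
Proof.
move=> [E0 PE0] [selS sepS] maxS; apply: contrapT => noE.
have fresh E : P E -> exists2 a, E a & forall s, S s -> s E <> a.
  move=> PE; apply: contrapT => allhit; apply: noE; exists E => // a Ea.
  apply: contrapT => nohit; apply: allhit; exists a => // s Ss sEa.
  by apply: nohit; exists s.
have [a0 _ _] := fresh E0 PE0.
have /choice[t tP] : forall E, exists a, P E -> E a /\ forall s, S s -> s E <> a.
  move=> E; have [PE|nPE] := pselect (P E); last by exists a0.
  by have [a Ea ha] := fresh E PE; exists a.
have tS : ~ S t by move=> St; have [_ /(_ t St)] := tP E0 PE0.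
apply: (maxS (S `|` [set t])).
  by split; [move=> s Ss; left | move=> /(_ t (or_intror erefl))].
split; first by move=> s [/selS//|->] E /tP[].
move=> s u [Ss|->] [Su|->] su E PE.
- exact: sepS.
- by have [_ /(_ s Ss)] := tP E PE.
- by have [_ /(_ u Su)] := tP E PE => h /esym.
- by [].
Qed.

Lemma exhausted_card_le {S E B} : separated_selectors S -> exhausts S E -> P B ->
  (E #<= B)%card.
Proof.
move=> [selS sepS] exE PB.
have /choice[g gP] : forall a, exists s, E a -> S s /\ s E = a.
  move=> a; have [Ea|nEa] := pselect (E a); last by exists (fun=> a).
  by have [s Ss sEa] := exE a Ea; exists s.
suff [f] : $|{injfun E >-> B}| by exact: inj_card_le.
apply/injfunPex; exists (fun a => g a B).
  by move=> a Ea; apply: selS PB; exact: (gP a Ea).1.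
move=> a b /[!inE] Ea Eb gab; have [Sa <-] := gP a Ea; have [Sb <-] := gP b Eb.
have [->//|ab] := pselect (g a = g b).
by case: (sepS _ _ Sa Sb ab B PB gab).
Qed.

Lemma card_le_minimum : P !=set0 -> exists2 A, P A & forall B, P B -> (A #<= B)%card.
Proof.
move=> P0; have [S [sepS maxS]] := exists_maximal_separated_selectors.
have [E PE exE] := maximal_separated_selectors_exhaust P0 sepS maxS.
by exists E => // B; apply: exhausted_card_le sepS exE.
Qed.

End card_le_minimum.

Lemma exists_min_dense (X : topologicalType) : exists D : set X, min_dense D.
Proof.
have [|D dD minD] := @card_le_minimum X (@dense X); last by exists D.
by exists setT => O [x Ox] _; exists x.
Qed.

Lemma dense_image {X Y : topologicalType} {f : X -> Y} {D : set X} :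
  continuous f -> (forall y, exists x, f x = y) -> dense D -> dense (f @` D).
Proof.
move=> /continuousP fC fS dD O [y Oy] oO; have [x fxy] := fS y.
have [|z [Ofz Dz]] := dD (f @^-1` O) _ (fC _ oO); first by exists x; rewrite /= fxy.
by exists (f z); split => //; exists z.
Qed.

Lemma min_dense_card_le {X Y : topologicalType} {f : X -> Y} {DX : set X} {DY : set Y} :
  continuous f -> (forall y, exists x, f x = y) -> min_dense DX -> min_dense DY ->
  (DY #<= DX)%card.
Proof.
move=> fC fS [dDX _] [_ minDY].
exact: card_le_trans (minDY _ (dense_image fC fS dDX)) (card_image_le f DX).
Qed.

Lemma density_Baire_card_le {X : topologicalType} {I : Type} {J : set I} {D : set X}
    (U : I -> set X) :
  density_Baire X -> min_dense D -> (J #<= D)%card ->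
  (forall i, J i -> open (U i) /\ dense (U i)) -> dense (\bigcap_(i in J) U i).
Proof.
move=> BX minD /pfcard_geP[->|[g]] oU.
  by rewrite bigcap_set0 => O [x Ox] _; exists x.
have dUg := BX D minD (U \o g) (fun x Dx => oU _ ('funS_g Dx)).
move=> O O0 oO; have [x [Ox Ux]] := dUg O O0 oO.
by exists x; split => // i /'surj_g[y Dy <-]; exact: Ux.
Qed.

Section bloom.
Context {X : topologicalType} {K : set X}.
Local Notation pi := (\pi_(bloom K) : X -> bloom K).

Lemma bloom_eqP x y : pi x = pi y <-> x = y \/ (K x /\ K y).
Proof. by split => [/eqmodP/asboolP|?]; last exact/eqmodP/asboolP. Qed.

Lemma bloom_pi_surj y : exists x, pi x = y.
Proof. by exists (repr y); exact: reprK. Qed.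

Lemma bloom_open_image {W : set X} : open W -> W `<=` ~` K -> open (pi @` W).
Proof.
move=> oW WK; suff preE : pi @^-1` (pi @` W) = W by move: oW; rewrite -{1}preE.
apply/seteqP; split => [x [w Ww /bloom_eqP[<-//|[Kw _]]]|x Wx]; last by exists x.
by case: (WK w Ww).
Qed.

Hypothesis closedK : closed K.

Lemma bloom_preimage_dense (V : set (bloom K)) : open V -> dense V ->
  dense (pi @^-1` V `|` K°).
Proof.
move=> oV dV W [w Ww] oW.
have [WK|/existsNP[x /not_implyP[Wx nKx]]] := pselect (W `<=` K).
  by exists w; split => //; right; move: WK; rewrite open_subsetE //; apply.
have oWK : open (W `\` K) by apply: openI => //; exact: closed_openC.
have [|_ [[z [Wz _] <-] Vz]] := dV _ _ (bloom_open_image oWK (@subDsetr _ _ _)).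
  by exists (pi x), x.
by exists z; split => //; left.
Qed.

Lemma bloom_bigcap_dense (I : Type) (J : set I) (V : I -> set (bloom K)) :
  (forall i, J i -> dense (V i)) ->
  dense (\bigcap_(i in J) (pi @^-1` V i `|` K°)) -> dense (\bigcap_(i in J) V i).
Proof.
move=> dV dW O [y Oy] oO.
have [[x [Ox nKx]]|inK] := pselect (exists x, O (pi x) /\ ~ K x).
  have oOK : open (pi @^-1` O `\` K) by apply: openI => //; exact: closed_openC.
  have [z [[Oz nKz] Wz]] := dW _ (ex_intro _ x (conj Ox nKx)) oOK.
  by exists (pi z); split => // i /Wz[//|/interior_subset].
have OK z : O (pi z) -> K z by move=> Oz; apply: contrapT => nKz; apply: inK; exists z.
have [x pxy] := bloom_pi_surj y; rewrite -pxy in Oy.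
exists (pi x); split => // i Ji.
have [u [Ou Vu]] := dV i Ji O (ex_intro _ _ Oy) oO.
have [u' pu'] := bloom_pi_surj u; rewrite -pu' in Ou Vu.
by have <- : pi u' = pi x by apply/bloom_eqP; right; split; apply: OK.
Qed.

End bloom.

Theorem mainTheorem7 (X : topologicalType) (K : set X) :
  continuum X -> density_Baire X -> subcontinuum K ->
  density_Baire (bloom K).
Proof.
move=> [_ [_ [_ hausX]]] BX [_ [compactK _]] DY minDY V oV.
have closedK := compact_closed hausX compactK.
have [DX minDX] := exists_min_dense X.
have DYDX := min_dense_card_le pi_continuous (@bloom_pi_surj _ K) minDX minDY.
apply: (bloom_bigcap_dense closedK) => [i /oV[]//|].
apply: (density_Baire_card_le _ BX minDX DYDX) => i /oV[oVi dVi]; split.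
  by apply: openU; [exact: oVi|exact: open_interior].
exact: bloom_preimage_dense.
Qed.
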